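(* Let $\mathcal{C}\in(\mathbb{R}^I)^{\otimes d}$ be symmetric and let $\mathcal{M}\subset(\mathbb{R}^I)^{\otimes(d-1)}$ be a finite set of symmetric decomposable tensors. Then $$\operatorname{srk}\operatorname{SAdj}(\mathcal{C},\mathcal{M})\le\operatorname{minsrk}(\mathcal{C}\bmod\mathcal{M})+d\dim\operatorname{Span}\mathcal{M}.$$
   Context: All tensors are real; symmetric rank $\operatorname{srk}$ is the minimal number of summands $\lambda v^{\otimes d}$. Symmetric adjoining: let $\mathcal{M}$ be indexed by a finite set $W$ disjoint from $I$, with $\mathcal{M}^{(w)}$ the element indexed by $w$. $\operatorname{SAdj}(\mathcal{C},\mathcal{M})\in(\mathbb{R}^{I\cup W})^{\otimes d}$ is the tensor $\mathcal{T}$ with $\mathcal{T}(k_1|\dots|k_d)=\mathcal{C}(k_1|\dots|k_d)$ if all $k_i\in I$; $\mathcal{T}(k_1|\dots|k_{j-1}|w|k_{j+1}|\dots|k_d)=\mathcal{M}^{(w)}(k_1|\dots|k_{j-1}|k_{j+1}|\dots|k_d)$ if $w\in W$ is in position $j$ and all other $k_h\in I$; and all other entries (two or more indices in $W$) equal $0$. $\mathcal{C}\bmod\mathcal{M}$ is the set of tensors with entries $\mathcal{C}(k_1|\dots|k_d)+\sum_{j=1}^d M_j^{(k_j)}(k_1|\dots|\widehat{k_j}|\dots|k_d)$ with arbitrary $M_j^{(k_j)}\in\operatorname{Span}\mathcal{M}$ chosen independently for each $j$ and each $k_j\in I$. $\operatorname{minsrk}\mathcal{A}$ is the minimal symmetric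 rank of a symmetric tensor in $\mathcal{A}$. *)

From HB Require Import structures.
From mathcomp Require Import all_boot all_order fingroup perm all_algebra.
From mathcomp Require Import reals.
Set Implicit Arguments. Unset Strict Implicit. Unset Printing Implicit Defensive.
Import Order.TTheory GRing.Theory Num.Theory.
Local Open Scope ring_scope.

(* A tensor of order n over the (finite) index set J with real entries:
   an element of (R^J)^{\otimes n}, i.e. a function of the multi-index
   (k_1 | ... | k_n), encoded as k : {ffun 'I_n -> J}. *)
Definition tensor (R : realType) (J : finType) (n : nat) :=
  {ffun {ffun 'I_n -> J} -> R^o}.

Definition sym_tensor (R : realType) (J : finType) (n : nat) (T : tensor R J n) :=
  forall (s : 'S_n) (k : {ffun 'I_n -> J}), T [ffun i => k (s i)] = T k.

Definition rank_one (R : realType) (J : finType) (n : nat) (lam : R) (v : J -> R)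
  : tensor R J n := [ffun k : {ffun 'I_n -> J} => lam * \prod_(i < n) v (k i)].

Definition sym_decomposable (R : realType) (J : finType) (n : nat) (T : tensor R J n) :=
  exists (lam : R) (v : J -> R), T = rank_one n lam v.

Definition srk_le (R : realType) (J : finType) (n : nat) (T : tensor R J n) (r : nat) :=
  exists (lam : 'I_r -> R) (v : 'I_r -> J -> R),
    T = \sum_(t < r) rank_one n (lam t) (v t).

Definition SpanM (R : realType) (I W : finType) (n : nat) (M : W -> tensor R I n)
  : {vspace tensor R I n} := <<[seq M w | w <- enum W]>>%VS.

(* Symmetric adjoining SAdj(C, M) in (R^{I \cup W})^{\otimes d}, where the
   disjoint union I \cup W is the sum type I + W.  Each of the sums below has
   at most one nonzero term:
   - the first is C(k) when all k_i are in I (and 0 otherwise);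
   - the second is M^(w)(k_1|..|^k_j|..|k_d) when exactly position j carries
     w \in W and all other indices are in I (and 0 otherwise).
   Entries with two or more indices in W are therefore 0. *)
Definition SAdj (R : realType) (I W : finType) (d : nat)
  (C : tensor R I d) (M : W -> tensor R I d.-1) : tensor R (I + W)%type d :=
  [ffun k : {ffun 'I_d -> (I + W)%type} =>
     \sum_(c : {ffun 'I_d -> I} | [forall i, k i == inl (c i)]) C c
   + \sum_(j < d) \sum_(w : W)
       \sum_(m : {ffun 'I_d.-1 -> I}
               | (k j == inr w) && [forall i, k (lift j i) == inl (m i)]) M w m].

(* T \in C mod M: T(k) = C(k) + \sum_j F_j^{(k_j)}(k_1|..|^k_j|..|k_d)
   with F_j^{(i)} \in Span M chosen independently for each j and each i \in I. *)
Definition in_mod (R : realType) (I W : finType) (d : nat)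
  (C : tensor R I d) (M : W -> tensor R I d.-1) (T : tensor R I d) :=
  exists F : 'I_d -> I -> tensor R I d.-1,
    (forall j i, F j i \in SpanM M) /\
    forall k : {ffun 'I_d -> I},
      T k = C k + \sum_(j < d) F j (k j) [ffun i => k (lift j i)].

From HB Require Import structures.
From mathcomp Require Import all_boot all_order fingroup perm all_algebra.
From mathcomp Require Import reals zify ring.
Import Order.TTheory GRing.Theory Num.Theory.
Set Implicit Arguments. Unset Strict Implicit. Unset Printing Implicit Defensive.
Local Open Scope ring_scope.

(* Write T = C + \sum_j F_j^(k_j)(k without k_j).  As T, C and all F_j^(x) are
   symmetric, averaging over cyclic shifts of the positions replaces every F_j
   by their mean F', so that C = T - \sum_j F'^(k_j)(k without k_j).  Extending
   by zero to I + W, SAdj(C, M) is then ext T plus \sum_j G^(k_j)(k without k_j)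
   with G^(x) = - F'^(x) for x in I and G^(w) = M^(w); every G^(z) lies in
   Span M.  Expanding G over a basis of Span M made of some of the
   M^(w) = mu u^(x)(d-1) splits the second term into dim Span M tensors
   \sum_j a(k_j) \prod_(i <> j) u(k_i), each of symmetric rank at most d by the
   polarization identity
     \sum_s c_s (a - (g/d) u + t_s u)^(x)d = \sum_j a(k_j) \prod_(i <> j) u(k_i),
   where the weights solve the Vandermonde system
   \sum_s c_s t_s^p = [p = d-1] for p < d and g = \sum_s c_s t_s^d. *)

Lemma prod_lift (R : comNzRingType) n (F : 'I_n -> R) (j : 'I_n) :
  \prod_(i < n.-1) F (lift j i) = \prod_(i < n | i != j) F i.
Proof.
rewrite [RHS]big_mkcond (bigD1_ord j) //= eqxx mul1r.
by apply: eq_bigr => i _; rewrite eq_sym neq_lift.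
Qed.

Lemma perm_lift_factor n (s : 'S_n.+1) (j : 'I_n.+1) :
  exists s' : 'S_n, forall i, s (lift j i) = lift (s j) (s' i).
Proof.
have sj_neq i : s j != s (lift j i) by rewrite (inj_eq perm_inj) neq_lift.
pose f i := odflt i (unlift (s j) (s (lift j i))).
have fE i : lift (s j) (f i) = s (lift j i).
  by rewrite /f; have [i' -> ->] := unlift_some (sj_neq i).
have f_inj : injective f.
  by move=> i1 i2 /(congr1 (lift (s j))); rewrite !fE => /perm_inj /lift_inj.
by exists (perm f_inj) => i; rewrite permE fE.
Qed.

Lemma exists_basis_sub (K : fieldType) (vT : vectType K) (X : seq vT) :
  exists2 Y, {subset Y <= X} & basis_of <<X>>%VS Y.
Proof.
elim: X => [|x X [Y sYX bY]].
  by exists [::] => //; rewrite span_nil; apply: nil_basis.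
have eY : <<Y>>%VS = <<X>>%VS by apply: span_basis.
case xX: (x \in <<X>>%VS).
  exists Y; first by move=> y /sYX; rewrite inE => ->; rewrite orbT.
  rewrite span_cons; move: bY; rewrite /basis_of => /andP[/eqP -> ->].
  by rewrite andbT; apply/eqP; symmetry; apply/addv_idPr; rewrite -memvE xX.
exists (x :: Y).
  by move=> y; rewrite !inE => /orP[->|/sYX ->]; rewrite ?orbT.
rewrite /basis_of !span_cons eY eqxx /= free_cons eY xX /=.
by case/andP: bY.
Qed.

Lemma coef_prod_linear (R : comNzRingType) (a b : nat -> R) k :
  let P := \prod_(j < k) ((b j)%:P * 'X + (a j)%:P) in
  [/\ (size P <= k.+1)%N, P`_k = \prod_(j < k) b j &
   (P * 'X)`_k = \sum_(j < k) a j * \prod_(i < k | i != j) b i].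
Proof.
elim: k => [|k [IH1 IH2 IH3]].
  by rewrite /= !big_ord0 coefMX /= coefC /= size_poly1.
set P := \prod_(j < k) _ in IH1 IH2 IH3 *.
rewrite /= big_ord_recr /= -/P.
have coefE i : (P * ((b k)%:P * 'X + (a k)%:P))`_i =
    (if i == 0%N then 0 else P`_i.-1 * b k) + P`_i * a k.
  by rewrite mulrDr mulrA coefD coefMX !coefMC.
split.
- apply: leq_trans (size_polyMleq _ _) _.
  have : (size ((b k)%:P * 'X + (a k)%:P)%R <= 2)%N.
    by rewrite size_MXaddC; case: ifP => // _; have := size_polyC_leq1 (b k).
  by move: IH1; set u := size _; set v := size P; lia.
- rewrite coefE /= (nth_default 0 IH1) mul0r addr0 IH2.
  by rewrite big_ord_recr.
- rewrite coefMX /= coefE.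
  have -> : (if k == 0%N then 0 else P`_k.-1 * b k) = (P * 'X)`_k * b k.
    by rewrite coefMX; case: ifP; rewrite ?mul0r.
  rewrite IH3 IH2 big_ord_recr /=.
  have -> : \prod_(i < k.+1 | i != ord_max) b i = \prod_(i < k) b i.
    rewrite big_mkcond big_ord_recr /= eqxx mulr1; apply: eq_bigr => i _.
    by rewrite ifT // neq_ltn /= ltn_ord.
  congr (_ + _); last by rewrite mulrC.
  rewrite mulr_suml; apply: eq_bigr => j _.
  rewrite [in RHS]big_mkcond big_ord_recr /= ifT; last first.
    by rewrite neq_ltn /= ltn_ord orbT.
  rewrite -mulrA; congr (_ * (_ * _)).
  by rewrite [LHS]big_mkcond; apply: eq_bigr => i _; rewrite -val_eqE.
Qed.

Lemma vandermonde_weights (R : numFieldType) n : exists (c t : 'I_n -> R),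
  forall p, (p < n)%N -> \sum_(s < n) c s * t s ^+ p = (p == n.-1)%:R.
Proof.
pose t (s : 'I_n) : R := (s : nat)%:R.
pose V := Vandermonde n (\row_s t s).
have V_unit : V \in unitmx.
  rewrite unitmxE unitfE det_Vandermonde; apply/prodf_neq0 => i _.
  rewrite big_mkcond; apply/prodf_neq0 => j _; case: ifP => ij; last exact: oner_neq0.
  by rewrite !mxE subr_eq0 eqr_nat; apply/eqP => E; move: ij; rewrite E ltnn.
pose e : 'cV[R]_n := \col_(p < n) (p == n.-1 :> nat)%:R.
exists (fun s => (invmx V *m e) s 0), t => p lt_pn.
have := congr1 (fun A : 'cV[R]_n => A (Ordinal lt_pn) 0) (mulKVmx V_unit e).
by rewrite /= !mxE => <-; apply: eq_bigr => s _; rewrite !mxE mulrC.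
Qed.

Section Polarization.

Variables (R : numFieldType) (n : nat) (c t : 'I_n.+1 -> R).
Hypothesis moments : forall p, (p < n.+1)%N ->
  \sum_(s < n.+1) c s * t s ^+ p = (p == n)%:R.

Let g := \sum_(s < n.+1) c s * t s ^+ n.+1.

Lemma weighted_sum_prod_linear (a b : 'I_n.+1 -> R) :
  \sum_s c s * \prod_j (a j + t s * b j) =
  \sum_j a j * \prod_(i < n) b (lift j i) + g * \prod_j b j.
Proof.
pose a' (x : nat) := a (inord x); pose b' (x : nat) := b (inord x).
have [sizeP lcP coefP] := coef_prod_linear a' b' n.+1.
set P := \prod_(j < n.+1) _ in sizeP lcP coefP.
have hornerP x : P.[x] = \prod_j (a j + x * b j).
  rewrite horner_prod; apply: eq_bigr => j _.
  by rewrite !hornerE /a' /b' inord_val addrC mulrC.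
transitivity (\sum_(p < n.+2) P`_p * \sum_s c s * t s ^+ p).
  under eq_bigr => s _ do rewrite -hornerP (horner_coef_wide _ sizeP) mulr_sumr.
  rewrite exchange_big; apply: eq_bigr => p _; rewrite mulr_sumr.
  by apply: eq_bigr => s _; rewrite mulrCA.
rewrite big_ord_recr /= lcP mulrC; congr (_ + _); last first.
  by congr (_ * _); apply: eq_bigr => j _; rewrite /b' inord_val.
rewrite (eq_bigr (fun p : 'I_n.+1 => P`_p * (p == n :> nat)%:R)); last first.
  by move=> p _; rewrite moments.
rewrite big_ord_recr /= eqxx mulr1 big1 ?add0r; last first.
  by move=> p _; rewrite ltn_eqF ?mulr0.
have := coefMX P n.+1; rewrite /= => <-; rewrite coefP.
apply: eq_bigr => j _; rewrite /a' inord_val -prod_lift; congr (_ * _).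
by apply: eq_bigr => i _; rewrite /b' inord_val.
Qed.

Lemma polarization_identity (a b : 'I_n.+1 -> R) :
  \sum_s c s * \prod_j (a j - g / n.+1%:R * b j + t s * b j) =
  \sum_j a j * \prod_(i < n) b (lift j i).
Proof.
rewrite weighted_sum_prod_linear.
have prod_split j : b j * \prod_(i < n) b (lift j i) = \prod_j b j.
  by rewrite [RHS](bigD1_ord j).
rewrite (eq_bigr (fun j => a j * \prod_(i < n) b (lift j i) - g / n.+1%:R * \prod_j b j));
  last by move=> j _; rewrite mulrBl -[_ / _ * b j * _]mulrA prod_split.
rewrite sumrB sumr_const card_ord -addrA [X in _ + X](_ : _ = 0) ?addr0 //.
have n1_neq0 : n.+1%:R != 0 :> R by rewrite pnatr_eq0.
by rewrite -mulr_natr; field; rewrite addrC natr1.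
Qed.

End Polarization.

Section Tensors.

Variables (R : realType) (J : finType).

Lemma srk_le_add n (A B : tensor R J n) r1 r2 :
  srk_le A r1 -> srk_le B r2 -> srk_le (A + B) (r1 + r2).
Proof.
move=> [l1 [v1 ->]] [l2 [v2 ->]].
exists (fun t => match split t with inl a => l1 a | inr b => l2 b end).
exists (fun t => match split t with inl a => v1 a | inr b => v2 b end).
rewrite big_split_ord /=; congr (_ + _); apply: eq_bigr => i _.
  by have /= -> := unsplitK (inl i : 'I_r1 + 'I_r2).
by have /= -> := unsplitK (inr i : 'I_r1 + 'I_r2).
Qed.

Lemma srk_le_sum n m p (A : 'I_m -> tensor R J n) :
  (forall b, srk_le (A b) p) -> srk_le (\sum_(b < m) A b) (m * p).
Proof.
elim: m A => [|m IH] A srkA.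
  by rewrite big_ord0; exists (fun _ => 0), (fun _ _ => 0); rewrite big_ord0.
rewrite big_ord_recr /= mulSn addnC; apply: srk_le_add; last exact: srkA.
by apply: IH => b; apply: srkA.
Qed.

Lemma rank_oneZ n a lam (v : J -> R) :
  a *: rank_one n lam v = rank_one n (a * lam) v.
Proof. by apply/ffunP => k; rewrite !ffunE -mulrA. Qed.

Lemma sym_tensor_span n (S : seq (tensor R J n)) X :
  {in S, forall Y, sym_tensor Y} -> X \in <<S>>%VS -> sym_tensor X.
Proof.
move=> symS /(@coord_span _ _ _ (in_tuple S)) -> s k; rewrite !sum_ffunE.
by apply: eq_bigr => i _; rewrite !ffunE symS // mem_nth.
Qed.

Lemma sym_tensor_lift_perm n (A : tensor R J n) : sym_tensor A ->
  forall (s : 'S_n.+1) (k : {ffun 'I_n.+1 -> J}) j,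
  A [ffun i => k (s (lift j i))] = A [ffun i => k (lift (s j) i)].
Proof.
move=> symA s k j; have [s' s'E] := perm_lift_factor s j.
rewrite -[RHS](symA s'); congr (A _); apply/ffunP => i.
by rewrite !ffunE s'E.
Qed.

Definition slot_sum n (G : 'I_n.+1 -> J -> tensor R J n) : tensor R J n.+1 :=
  [ffun k : {ffun 'I_n.+1 -> J} => \sum_(j < n.+1) G j (k j) [ffun i => k (lift j i)]].

Lemma eq_slot_sum n (G1 G2 : 'I_n.+1 -> J -> tensor R J n) :
  (forall j z, G1 j z = G2 j z) -> slot_sum G1 = slot_sum G2.
Proof.
by move=> eqG; apply/ffunP => k; rewrite !ffunE; apply: eq_bigr => j _; rewrite eqG.
Qed.

Lemma slot_sumB n (G1 G2 : 'I_n.+1 -> J -> tensor R J n) :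
  slot_sum (fun j z => G1 j z - G2 j z) = slot_sum G1 - slot_sum G2.
Proof.
by apply/ffunP => k; rewrite !ffunE -sumrB; apply: eq_bigr => j _; rewrite !ffunE.
Qed.

Lemma slot_sum_sum n m (G : 'I_m -> 'I_n.+1 -> J -> tensor R J n) :
  slot_sum (fun j z => \sum_(b < m) G b j z) = \sum_(b < m) slot_sum (G b).
Proof.
apply/ffunP => k; rewrite !ffunE sum_ffunE.
under eq_bigr do rewrite sum_ffunE.
by rewrite exchange_big; apply: eq_bigr => b _; rewrite ffunE.
Qed.

(* Summing [slot_sum_perm] over the cyclic shifts of the positions averages the G_j. *)
Lemma slot_sum_sym_avg n (G : 'I_n.+1 -> J -> tensor R J n) :
  (forall j z, sym_tensor (G j z)) -> sym_tensor (slot_sum G) ->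
  slot_sum G = slot_sum (fun _ z => n.+1%:R^-1 *: \sum_j G j z).
Proof.
move=> symG symS; apply/ffunP => k.
have slot_sum_perm (s : 'S_n.+1) :
    slot_sum G k = \sum_j G j (k (s j)) [ffun i => k (lift (s j) i)].
  rewrite -(symS s) ffunE; apply: eq_bigr => j _.
  rewrite ffunE -(sym_tensor_lift_perm (symG _ _)); congr (G _ _ _).
  by apply/ffunP => i; rewrite !ffunE.
have shift_sum : n.+1%:R * slot_sum G k =
    \sum_j \sum_j' G j (k j') [ffun i => k (lift j' i)].
  pose shift (a : 'I_n.+1) : 'S_n.+1 := perm (addrI a).
  transitivity (\sum_(a < n.+1)
      \sum_j G j (k (shift a j)) [ffun i => k (lift (shift a j) i)]).
    rewrite -(eq_bigr _ (fun a _ => slot_sum_perm (shift a))).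
    by rewrite sumr_const card_ord mulr_natl.
  rewrite exchange_big; apply: eq_bigr => j _.
  by rewrite [RHS](reindex_inj (addIr j)); apply: eq_bigr => a _; rewrite permE.
have n1_neq0 : n.+1%:R != 0 :> R by rewrite pnatr_eq0.
apply: (mulfI n1_neq0); rewrite shift_sum exchange_big ffunE mulr_sumr.
apply: eq_bigr => j' _.
by rewrite ffunE sum_ffunE mulrA mulfV ?mul1r.
Qed.

Lemma srk_le_slot_sum_rank_one n (x y : J -> R) :
  srk_le (slot_sum (fun _ z => rank_one n (x z) y)) n.+1.
Proof.
have [c [t moments]] := vandermonde_weights R n.+1.
pose g := \sum_(s < n.+1) c s * t s ^+ n.+1.
exists c, (fun s z => x z - g / n.+1%:R * y z + t s * y z).
apply/ffunP => k; rewrite sum_ffunE.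
under [RHS]eq_bigr do rewrite ffunE.
rewrite (polarization_identity moments) ffunE; apply: eq_bigr => j _.
by rewrite !ffunE; congr (_ * _); apply: eq_bigr => i _; rewrite ffunE.
Qed.

End Tensors.

Section Extension.

Variables (R : realType) (I W : finType).

Definition tensor_ext n (A : tensor R I n) : tensor R (I + W)%type n :=
  [ffun k : {ffun 'I_n -> (I + W)%type} =>
     \sum_(c : {ffun 'I_n -> I} | [forall i, k i == inl (c i)]) A c].

Definition extend0 (v : I -> R) (z : (I + W)%type) : R :=
  if z is inl x then v x else 0.

Fact tensor_ext_is_linear n : linear (@tensor_ext n).
Proof.
move=> a A B; apply/ffunP => k; rewrite !ffunE scaler_sumr -big_split /=.
by apply: eq_bigr => c _; rewrite !ffunE.
Qed.

HB.instance Definition _ n :=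
  GRing.isLinear.Build R (tensor R I n) (tensor R (I + W)%type n) _ (@tensor_ext n)
    (@tensor_ext_is_linear n).

Lemma tensor_ext_inl n (A : tensor R I n) (c : {ffun 'I_n -> I}) :
  tensor_ext A [ffun i => inl (c i)] = A c.
Proof.
rewrite ffunE (big_pred1 c) // => c' /=.
apply/forallP/eqP => [kc|-> i]; last by rewrite ffunE.
by apply/ffunP => i; move/eqP: (kc i); rewrite ffunE => -[].
Qed.

Lemma tensor_ext_inr n (A : tensor R I n) (k : {ffun 'I_n -> (I + W)%type}) i w :
  k i = inr w -> tensor_ext A k = 0.
Proof.
move=> ki; rewrite ffunE big_pred0 // => c.
by apply/negbTE/negP => /forallP /(_ i); rewrite ki.
Qed.

Lemma ffun_inl_or_inr n (k : {ffun 'I_n -> (I + W)%type}) :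
  (exists c : {ffun 'I_n -> I}, k = [ffun i => inl (c i)]) \/
  (exists i w, k i = inr w).
Proof.
have [i | allI] := pickP (fun i => if k i is inr _ then true else false).
  by case ki: (k i) => // [w] _; right; exists i, w.
have /fin_all_exists [c kc] : forall i, exists x, k i = inl x.
  by move=> i; move: (allI i); case: (k i) => // x _; exists x.
by left; exists (finfun c); apply/ffunP => i; rewrite !ffunE kc.
Qed.

Lemma tensor_ext_rank_one n lam (v : I -> R) :
  tensor_ext (rank_one n lam v) = rank_one n lam (extend0 v).
Proof.
apply/ffunP => k; case: (ffun_inl_or_inr k) => [[c ->] | [i [w ki]]].
  rewrite tensor_ext_inl !ffunE; congr (_ * _).
  by apply: eq_bigr => i _; rewrite ffunE.
by rewrite (tensor_ext_inr _ ki) ffunE (bigD1 i) //= ki mul0r mulr0.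
Qed.

Lemma srk_le_tensor_ext n (A : tensor R I n) r :
  srk_le A r -> srk_le (tensor_ext A) r.
Proof.
move=> [lam [v ->]]; exists lam, (fun t => extend0 (v t)).
by rewrite linear_sum; apply: eq_bigr => t _; apply: tensor_ext_rank_one.
Qed.

Lemma tensor_ext_slot_sum n (G : 'I_n.+1 -> I -> tensor R I n) :
  tensor_ext (slot_sum G) =
  slot_sum (fun j z => if z is inl x then tensor_ext (G j x) else 0).
Proof.
apply/ffunP => k; case: (ffun_inl_or_inr k) => [[c ->] | [i0 [w ki0]]].
  rewrite tensor_ext_inl !ffunE; apply: eq_bigr => j _; rewrite ffunE.
  by rewrite -tensor_ext_inl; congr (tensor_ext _ _); apply/ffunP => i; rewrite !ffunE.
rewrite (tensor_ext_inr _ ki0) ffunE big1 // => j _.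
have [->|j_neq_i0] := eqVneq j i0; first by rewrite ki0 ffunE.
have [i' i'E _] := unlift_some j_neq_i0.
case: (k j) => [x|w']; last by rewrite ffunE.
have ki' : [ffun i => k (lift j i)] i' = inr w by rewrite ffunE -i'E.
exact: tensor_ext_inr ki'.
Qed.

Lemma SAdjE n (C : tensor R I n.+1) (M : W -> tensor R I n) :
  SAdj C M = tensor_ext C +
    slot_sum (fun _ z => if z is inr w then tensor_ext (M w) else 0).
Proof.
apply/ffunP => k; rewrite !ffunE; congr (_ + _); apply: eq_bigr => j _.
case kj: (k j) => [x|w0].
  by rewrite ffunE big1 // => w _; apply: big_pred0.
rewrite (bigD1 w0) //= [X in _ + X]big1 ?addr0 => [|w w_neq].
  rewrite ffunE; apply: eq_bigl => m; rewrite eqxx /=.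
  by apply: eq_forallb => i; rewrite ffunE.
by apply: big_pred0 => m; rewrite -sum_eqE /= eq_sym (negbTE w_neq).
Qed.

Lemma SAdj_slot_sum n (C T : tensor R I n.+1) (M : W -> tensor R I n)
    (H : I -> tensor R I n) :
  T = C + slot_sum (fun _ => H) ->
  SAdj C M = tensor_ext T +
    slot_sum (fun _ z => tensor_ext (match z with inl x => - H x | inr w => M w end)).
Proof.
move=> TE; have -> : C = T - slot_sum (fun _ => H) by rewrite TE addrK.
rewrite SAdjE linearB /= tensor_ext_slot_sum -addrA; congr (_ + _).
rewrite addrC -slot_sumB; apply: eq_slot_sum => _ [x|w].
  by rewrite linearN sub0r.
by rewrite subr0.
Qed.

Lemma srk_le_slot_sum_span n (S : seq (tensor R I n))
    (G : (I + W)%type -> tensor R I n) :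
  {in S, forall Y, sym_decomposable Y} -> (forall z, G z \in <<S>>%VS) ->
  srk_le (slot_sum (fun _ z => tensor_ext (G z))) (size S * n.+1).
Proof.
move=> decS GS.
have /fin_all_exists [p Sp] : forall b : 'I_(size S),
    exists p : R * (I -> R), S`_b = rank_one n p.1 p.2.
  by move=> b; have [lam [v ->]] := decS _ (mem_nth 0 (ltn_ord b)); exists (lam, v).
pose x b z := coord (in_tuple S) b (G z) * (p b).1.
rewrite (@eq_slot_sum _ _ _ _ (fun _ z => \sum_b rank_one n (x b z) (extend0 (p b).2))).
  by rewrite slot_sum_sum; apply: srk_le_sum => b; apply: srk_le_slot_sum_rank_one.
move=> _ z; rewrite {1}(@coord_span _ _ _ (in_tuple S) _ (GS z)) linear_sum.
apply: eq_bigr => b _.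
by rewrite Sp rank_oneZ /= tensor_ext_rank_one.
Qed.

End Extension.

Theorem proposition3p15 (R : realType) (I W : finType) (d : nat)
  (C : tensor R I d) (M : W -> tensor R I d.-1) :
  (0 < d)%N ->
  sym_tensor C ->
  injective M ->
  (forall w, sym_tensor (M w) /\ sym_decomposable (M w)) ->
  forall (T : tensor R I d) (r : nat),
    sym_tensor T -> in_mod C M T -> srk_le T r ->
    srk_le (SAdj C M) (r + d * \dim (SpanM M))%N.
Proof.
case: d => // n in C M *; move=> _ symC _ Mdec T r symT [F [FS TE]] srkT.
have symF j x : sym_tensor (F j x).
  by apply: (sym_tensor_span _ (FS j x)) => _ /mapP[w _ ->]; case: (Mdec w).
have slotF : slot_sum F = T - C.
  by apply/ffunP => k; rewrite !ffunE TE addrAC subrr add0r.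
have symSF : sym_tensor (slot_sum F) by rewrite slotF => s k; rewrite !ffunE symT symC.
pose Fbar x := n.+1%:R^-1 *: \sum_j F j x.
have TE' : T = C + slot_sum (fun _ => Fbar).
  by rewrite -(slot_sum_sym_avg symF symSF) slotF addrC subrK.
have [Y sYM bY] := exists_basis_sub [seq M w | w <- enum W].
have dimE : \dim (SpanM M) = size Y := size_basis (X := in_tuple Y) bY.
rewrite (SAdj_slot_sum M TE') dimE mulnC.
apply: srk_le_add; first exact: srk_le_tensor_ext.
apply: srk_le_slot_sum_span => [_ /sYM /mapP[w _ ->] | z]; first by case: (Mdec w).
rewrite (span_basis bY); case: z => [x|w].
  by rewrite rpredN rpredZ // rpred_sum.
by rewrite memv_span // map_f // mem_enum.
Qed.
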